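(* Let $r\ge 3$, $n\ge1$, and let $f:\mathbb{Z}_r^n\to\mathbb{C}$ satisfy $f^{>1}\equiv 0$. Suppose $\|d(f,\{0,1\})\|_2^2\le\epsilon'$, $\|f^{=1}\|_2^2<10^4\epsilon'$, and $\epsilon'<\frac{2}{10^8 r}$. Then $\|f^{=1}\|_2^2<2\epsilon'$.
   Context: $\mathbb{Z}_r^n$ carries the uniform probability measure $\mu$; for $f:\mathbb{Z}_r^n\to\mathbb{C}$, $\|f\|_2^2=\int|f|^2\,d\mu$. For $S\in\mathbb{Z}_r^n$, $u_S(T)=\exp\big(2\pi i\sum_{k=1}^n S_kT_k/r\big)$; these form an orthonormal basis, and $\widehat f(S)=\int f(T)\overline{u_S(T)}\,\mu(dT)$, so $f=\sum_S\widehat f(S)u_S$. Let $|S|=|\{k:S_k\ne0\}|$, $f^{=k}=\sum_{|S|=k}\widehat f(S)u_S$, $f^{>k}=\sum_{|S|>k}\widehat f(S)u_S$. For $z\in\mathbb{C}$, $d(z,\{0,1\})=\min(|z|,|z-1|)$, and $d(f,\{0,1\})$ denotes the function $x\mapsto d(f(x),\{0,1\})$. *)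

From mathcomp Require Import all_boot all_order all_algebra.
From mathcomp Require Import all_classical all_reals all_analysis.
From mathcomp Require Export complex.
Set Implicit Arguments. Unset Strict Implicit. Unset Printing Implicit Defensive.
Import Order.TTheory GRing.Theory Num.Theory.
Local Open Scope ring_scope.

(* The group Z_r^n: functions 'I_n -> 'I_r (coordinate k in {0,..,r-1}). *)
Definition cube (r n : nat) : finType := {ffun 'I_n -> 'I_r}.

Definition mean (K : fieldType) (r n : nat) (g : cube r n -> K) : K :=
  (r ^ n)%:R^-1 * \sum_(T : cube r n) g T.

Definition omega (R : realType) (r : nat) : R[i] :=
  (cos (2 * pi / r%:R) +i* sin (2 * pi / r%:R))%C.

Definition u (R : realType) (r n : nat) (S T : cube r n) : R[i] :=
  omega R r ^+ (\sum_(k < n) (S k : nat) * (T k : nat))%N.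

Definition fhat (R : realType) (r n : nat) (f : cube r n -> R[i]) (S : cube r n)
  : R[i] := mean (fun T => f T * (@u R r n S T)^*).

Definition wt (r n : nat) (S : cube r n) : nat := #|[set k | (S k : nat) != 0%N]|.

Definition fpart (R : realType) (r n : nat) (f : cube r n -> R[i])
  (P : nat -> bool) (T : cube r n) : R[i] :=
  \sum_(S : cube r n | P (wt S)) @fhat R r n f S * @u R r n S T.

Definition feq (R : realType) (r n : nat) (f : cube r n -> R[i]) (k : nat) :=
  @fpart R r n f (fun m => (m == k)%N).
Definition fgt (R : realType) (r n : nat) (f : cube r n -> R[i]) (k : nat) :=
  @fpart R r n f (fun m => (k < m)%N).

Definition norm2sq (R : realType) (r n : nat) (g : cube r n -> R[i]) : R :=
  mean (fun T => Normc.normc (g T) ^+ 2).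

Definition norm2sqR (R : realType) (r n : nat) (h : cube r n -> R) : R :=
  mean (fun T => h T ^+ 2).

Definition d01 (R : realType) (z : R[i]) : R := Num.min (Normc.normc z) (Normc.normc (z - 1)).

(* Since f has degree at most 1, f = c + Y where Y = f^{=1} = sum_k g_k(T_k) and every
   g_k has mean zero; under the uniform measure the coordinates T_k are independent.
   Hence E|Y|^2 = s := ||f^{=1}||^2, and adding one coordinate at a time shows
   E|Y|^4 <= (6 + r) s^2.  Let A = d(c,{0,1})^2, attained at b in {0,1}.  Pointwise
   A <= 2 d(f,{0,1})^2 + 2|Y|^2, so A <= 2 eps' + 2 s.  Conversely
   d(f,{0,1})^2 >= |f - b|^2 - 4 |f - b|^4 and |f - b|^4 <= 8 A^2 + 8 |Y|^4; averaging,
   the cross term of |c - b + Y|^2 vanishes and A + s - 32 A^2 - 32 E|Y|^4 <= eps'.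
   As s < 10^4 eps' and eps' < 2 / (10^8 r), the quadratic terms are negligible and
   s < 2 eps' follows. *)

From mathcomp Require Import all_boot all_order all_algebra.
From mathcomp Require Import all_classical all_reals all_analysis.
From mathcomp Require Import complex perm.
From mathcomp Require Import ring lra.
Import Order.TTheory GRing.Theory Num.Theory.
Local Open Scope ring_scope.

Local Notation Re := complex.Re.
Local Notation Im := complex.Im.

(** * Characters of Z_r^n *)

Lemma sum_expr_unity_root (K : idomainType) (r : nat) (z : K) :
  z ^+ r = 1 -> \sum_(s < r) z ^+ s = if z == 1 then r%:R else 0.
Proof.
move=> zr1; have [->|z1] := eqVneq z 1.
  by rewrite (eq_bigr (fun _ => 1)) ?sumr_const ?card_ord // => s _; rewrite expr1n.
have := subrX1 z r; rewrite zr1 subrr => /esym/eqP.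
by rewrite mulf_eq0 subr_eq0 (negbTE z1) => /eqP.
Qed.

Section RootOfUnity.
Variable R : realType.

Lemma expr_cos_sin (t : R) (m : nat) :
  (cos t +i* sin t)%C ^+ m = (cos (m%:R * t) +i* sin (m%:R * t))%C.
Proof.
elim: m => [|m IHm]; first by rewrite expr0 mul0r cos0 sin0.
rewrite exprS IHm -addn1 natrD mulrDl mul1r cosD sinD /=.
by congr (_ +i* _)%C; ring.
Qed.

Lemma omega_prim_root (r : nat) : (0 < r)%N -> r.-primitive_root (omega R r).
Proof.
move=> r_gt0; apply/andP; split=> //; apply/forallP => i; rewrite unity_rootE.
rewrite /omega expr_cos_sin; have r_neq0 : r%:R != 0 :> R by rewrite pnatr_eq0 -lt0n.
have [->|ir] := eqVneq i.+1 r.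
  have -> : r%:R * (2 * pi / r%:R) = pi *+ 2 :> R by rewrite mulr2n; field.
  by rewrite cos2pi sin2pi !eqxx.
have ir_lt : (i.+1 < r)%N by rewrite ltn_neqAle ir ltn_ord.
rewrite eqbF_neg eq_complex negb_and; apply/orP; left.
set x := i.+1%:R * pi / r%:R : R.
have -> : i.+1%:R * (2 * pi / r%:R) = x *+ 2 by rewrite /x mulr2n; field.
have sin_x : 0 < sin x.
  apply: sin_gt0_pi; rewrite divr_gt0 ?mulr_gt0 ?ltr0n ?pi_gt0 //=.
  by rewrite ltr_pdivrMr ?ltr0n // mulrC ltr_pM2l ?pi_gt0 // ltr_nat.
rewrite cos_mulr2n cos2sin2 mulr2n; apply/eqP => /= cos_eq1.
by have := exprn_gt0 2 sin_x; lra.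
Qed.

Lemma conj_omega (r : nat) : (omega R r)^*%C = (omega R r)^-1.
Proof.
apply/esym/mulr1_eq; apply/eqP; rewrite /omega eq_complex /=.
set t := 2 * pi / r%:R; have := cos2Dsin2 t.
rewrite !expr2 => h; apply/andP; split; apply/eqP; [lra | ring].
Qed.

End RootOfUnity.

Section Characters.
Context {R : realType} {r n : nat}.
Hypothesis r_gt0 : (0 < r)%N.

Lemma u_prod (S T : cube r n) : u R S T = \prod_(k < n) (omega R r ^+ T k) ^+ S k.
Proof.
rewrite /u (big_morph _ (exprD _) (expr0 _)); apply: eq_bigr => k _.
by rewrite -exprM mulnC.
Qed.

Lemma u_mul_conj (S T T' : cube r n) : u R S T * (u R S T')^*%C =
  \prod_(k < n) (omega R r ^+ T k / omega R r ^+ T' k) ^+ S k.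
Proof.
rewrite !u_prod rmorph_prod -big_split /=; apply: eq_bigr => k _.
by rewrite !rmorphXn [X in X ^+ T' k](conj_omega R r) exprVn exprMn.
Qed.

Lemma sum_u_mul_conj (T T' : cube r n) :
  \sum_(S : cube r n) u R S T * (u R S T')^*%C = if T == T' then (r ^ n)%:R else 0.
Proof.
have prim := @omega_prim_root R r r_gt0.
have omega_neq0 : omega R r != 0 by rewrite (prim_root_eq0 prim) -lt0n.
have sum_k k : \sum_(s < r) (omega R r ^+ T k / omega R r ^+ T' k) ^+ s =
    if T k == T' k then r%:R else 0.
  rewrite sum_expr_unity_root; last first.
    rewrite exprMn exprVn -!exprM !(mulnC _ r) !exprM (prim_expr_order prim).
    by rewrite !expr1n invr1 mulr1.
  have omegaX_neq0 m : omega R r ^+ m != 0 by rewrite expf_neq0.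
  rewrite -(inj_eq (mulIf (omegaX_neq0 (T' k)))) divfK // mul1r.
  by rewrite (eq_prim_root_expr prim) !modn_small.
under eq_bigr do rewrite u_mul_conj.
rewrite /cube -(bigA_distr_bigA (fun k (s : 'I_r) =>
  (omega R r ^+ T k / omega R r ^+ T' k) ^+ s)) /=.
under eq_bigr do rewrite sum_k.
have [<-|/eqP TT'] := eqVneq T T'.
  by rewrite (eq_bigr (fun=> r%:R)) ?prodr_const ?card_ord ?natrX // => k _; rewrite eqxx.
have [k Tk] : exists k, T k != T' k.
  by apply/existsP; apply: contra_notT TT' => /existsPn Tk; apply/ffunP => k; apply/eqP/negPn.
by rewrite (bigD1 k) //= (negbTE Tk) mul0r.
Qed.

Lemma fourier_inversion (f : cube r n -> R[i]) (T : cube r n) :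
  \sum_(S : cube r n) fhat f S * u R S T = f T.
Proof.
transitivity ((r ^ n)%:R^-1 *
    \sum_(T' : cube r n) f T' * \sum_(S : cube r n) u R S T * (u R S T')^*%C).
  rewrite /fhat /mean; under eq_bigr do rewrite -mulrA big_distrl /=.
  rewrite -big_distrr /= exchange_big /=; congr (_ * _); apply: eq_bigr => T' _.
  by rewrite big_distrr /=; apply: eq_bigr => S _; rewrite mulrA mulrAC.
under eq_bigr do rewrite sum_u_mul_conj.
rewrite (bigD1 T) //= eqxx big1 ?addr0 => [|T' /negbTE]; last first.
  by rewrite eq_sym => ->; rewrite mulr0.
by rewrite mulrCA mulVf ?mulr1 // pnatr_eq0 expn_eq0 negb_and -lt0n r_gt0.
Qed.

Lemma deg1_decomposition (f : cube r n -> R[i]) :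
  (forall T, fgt f 1 T = 0) -> exists c, forall T, f T = c + feq f 1 T.
Proof.
move=> f_gt1; pose S0 : cube r n := [ffun=> Ordinal r_gt0].
have wt_eq0 S : (wt S == 0%N) = (S == S0).
  rewrite /wt cards_eq0; apply/eqP/eqP => [/setP wtS|->]; last first.
    by apply/setP => k; rewrite !inE ffunE.
  apply/ffunP => k; apply/val_inj; move: (wtS k).
  by rewrite !inE ffunE /= => /negbFE/eqP.
exists (fhat f S0) => T.
rewrite -[LHS](fourier_inversion f T) (bigID (fun S => 1 < wt S)%N) /=.
move: (f_gt1 T); rewrite /fgt /fpart => ->; rewrite add0r.
rewrite (bigID (fun S => wt S == 1%N)) /= addrC; congr (_ + _).
  rewrite (big_pred1 S0) => [|S]; last by rewrite /= -wt_eq0; case: (wt S) => [|[|]].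
  by rewrite /u big1 ?expr0 ?mulr1 // => k _; rewrite ffunE.
by apply: eq_bigl => S; case: (wt S) => [|[|]].
Qed.

Definition deg1_coord (f : cube r n -> R[i]) (k : 'I_n) (x : 'I_r) : R[i] :=
  \sum_(S : cube r n | (wt S == 1%N) && (S k != 0 :> nat)) fhat f S * omega R r ^+ (S k * x).

Lemma sum_deg1_coord (f : cube r n -> R[i]) (k : 'I_n) :
  \sum_(x < r) deg1_coord f k x = 0.
Proof.
rewrite exchange_big big1 //= => S /andP[_ Sk]; rewrite -big_distrr /=.
have prim := @omega_prim_root R r r_gt0.
under eq_bigr do rewrite exprM.
rewrite sum_expr_unity_root; last by rewrite -exprM mulnC exprM (prim_expr_order prim) expr1n.
rewrite -(expr0 (omega R r)) (eq_prim_root_expr prim) mod0n modn_small //.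
by rewrite (negbTE Sk) mulr0.
Qed.

Lemma feq1E (f : cube r n -> R[i]) (T : cube r n) :
  feq f 1 T = \sum_(k < n) deg1_coord f k (T k).
Proof.
rewrite /feq /fpart /deg1_coord.
under [RHS]eq_bigr do rewrite big_mkcond /=.
rewrite exchange_big /= big_mkcond /=; apply: eq_bigr => S _.
case: eqP => [wtS|_]; last by rewrite big1.
have /cards1P[k0 S_k0] : #|[set k | S k != 0 :> nat]| == 1%N by apply/eqP.
have Sk k : (S k != 0 :> nat) = (k == k0) by move/setP: S_k0 => /(_ k); rewrite !inE.
rewrite (bigD1 k0) //= big1 ?addr0 => [|k /negbTE k0k]; last by rewrite Sk k0k.
rewrite Sk eqxx /u (bigD1 k0) //= big1 ?addn0 // => k /negbTE k0k.
by move: (Sk k); rewrite k0k => /negbFE/eqP ->.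
Qed.

End Characters.

(** * Averages over the cube and independent coordinates *)

Definition avg {K : fieldType} {r : nat} (G : 'I_r -> K) : K := r%:R^-1 * \sum_(x < r) G x.

Definition indep_of_coord {A : Type} {r n : nat} (k : 'I_n) (F : cube r n -> A) :=
  forall T T' : cube r n, (forall j, j != k -> T j = T' j) -> F T = F T'.

Lemma indep_of_coord_map2 {A B C : Type} {r n : nat} {k : 'I_n} (h : A -> B -> C)
    {F : cube r n -> A} {G : cube r n -> B} :
  indep_of_coord k F -> indep_of_coord k G -> indep_of_coord k (fun T => h (F T) (G T)).
Proof. by move=> Fk Gk T T' TT'; rewrite (Fk _ _ TT') (Gk _ _ TT'). Qed.

Section Mean.
Context {K : numFieldType} {r n : nat}.
Hypothesis r_gt0 : (0 < r)%N.
Implicit Types (F G : cube r n -> K) (k : 'I_n).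

Lemma eq_mean {F} G : (forall T, F T = G T) -> mean F = mean G.
Proof. by move=> FG; rewrite /mean (eq_bigr _ (fun T _ => FG T)). Qed.

Lemma ler_mean {F G} : (forall T, F T <= G T) -> mean F <= mean G.
Proof. by move=> FG; rewrite ler_wpM2l ?invr_ge0 ?ler0n ?ler_sum. Qed.

Lemma mean_ge0 F : (forall T, 0 <= F T) -> 0 <= mean F.
Proof. by move=> F0; rewrite mulr_ge0 ?invr_ge0 ?ler0n ?sumr_ge0. Qed.

Lemma meanD F G : mean (fun T => F T + G T) = mean F + mean G.
Proof. by rewrite /mean big_split mulrDr. Qed.

Lemma meanZ (c : K) F : mean (fun T => c * F T) = c * mean F.
Proof. by rewrite /mean -big_distrr /= mulrCA. Qed.

Lemma mean_cst (c : K) : mean (fun _ : cube r n => c) = c.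
Proof.
rewrite /mean sumr_const card_ffun !card_ord -[c *+ _]mulr_natl mulKf //.
by rewrite pnatr_eq0 expn_eq0 negb_and -lt0n r_gt0.
Qed.

Lemma sum_fixed_coord {k F} (x y : 'I_r) : indep_of_coord k F ->
  \sum_(T : cube r n | T k == x) F T = \sum_(T : cube r n | T k == y) F T.
Proof.
move=> Fk; pose sw (T : cube r n) : cube r n :=
  [ffun j => if j == k then tperm x y (T j) else T j].
have swK : involutive sw.
  by move=> T; apply/ffunP => j; rewrite !ffunE; case: eqP => // ->; rewrite tpermK.
rewrite (reindex_inj (inv_inj swK)) /=; apply: eq_big => [T|T _].
  by rewrite ffunE eqxx (canF_eq (tpermK x y)) tpermL.
by apply: Fk => j jk; rewrite ffunE (negbTE jk).
Qed.

Lemma sum_coord_value {k F} (x : 'I_r) : indep_of_coord k F ->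
  \sum_(T : cube r n | T k == x) F T = r%:R^-1 * \sum_(T : cube r n) F T.
Proof.
move=> Fk; rewrite [in RHS](partition_big (fun T : cube r n => T k) xpredT) //=.
under [in RHS]eq_bigr => y _ do rewrite (sum_fixed_coord y x Fk).
rewrite sumr_const card_ord; set S := \sum_(T | _) _.
by rewrite -[S *+ r]mulr_natl mulKf // pnatr_eq0 -lt0n.
Qed.

Lemma mean_mul_coord {k F} (G : 'I_r -> K) : indep_of_coord k F ->
  mean (fun T => F T * G (T k)) = mean F * avg G.
Proof.
move=> Fk; rewrite /mean /avg (partition_big (fun T : cube r n => T k) xpredT) //=.
transitivity ((r ^ n)%:R^-1 * \sum_(x < r) (r%:R^-1 * \sum_(T : cube r n) F T) * G x).
  congr (_ * _); apply: eq_bigr => x _.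
  rewrite -(sum_coord_value x Fk) big_distrl /=.
  by apply: eq_bigr => T /eqP <-.
by rewrite -big_distrr /=; ring.
Qed.

Lemma mean_coord k (G : 'I_r -> K) : mean (fun T => G (T k)) = avg G.
Proof.
rewrite -[RHS]mul1r -[1 in RHS](mean_cst 1) -(@mean_mul_coord k (fun=> 1)) => [|T T' _] //.
by apply: eq_mean => T; rewrite mul1r.
Qed.

Lemma mean_sum_coord (P : pred 'I_n) (g : 'I_n -> 'I_r -> K) :
  mean (fun T => \sum_(k | P k) g k (T k)) = \sum_(k | P k) avg (g k).
Proof.
rewrite /mean exchange_big big_distrr /=; apply: eq_bigr => k _.
exact: mean_coord.
Qed.

End Mean.

(** * Moments of sums of independent coordinates *)

Lemma sqr_norm2D_expand_le {R : realFieldType} (x y u v : R) :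
  ((x + u) ^+ 2 + (y + v) ^+ 2) ^+ 2 <=
  (x ^+ 2 + y ^+ 2) ^+ 2 + (6 * ((x ^+ 2 + y ^+ 2) * (u ^+ 2 + v ^+ 2))
  + ((u ^+ 2 + v ^+ 2) ^+ 2 + (4 * (((x ^+ 2 + y ^+ 2) * x) * u)
  + (4 * (((x ^+ 2 + y ^+ 2) * y) * v) + (4 * (x * (u * (u ^+ 2 + v ^+ 2)))
  + 4 * (y * (v * (u ^+ 2 + v ^+ 2)))))))).
Proof. by have := sqr_ge0 (x * v - y * u); nra. Qed.

Section IndependentIncrement.
Context {R : realFieldType} {r n : nat} {k : 'I_n}.
Hypothesis r_gt0 : (0 < r)%N.
Context {a b : cube r n -> R} {c d : 'I_r -> R}.
Hypotheses (a_k : indep_of_coord k a) (b_k : indep_of_coord k b).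
Hypotheses (avg_c : avg c = 0) (avg_d : avg d = 0).

Lemma mean_sqr_add_coord :
  mean (fun T => (a T + c (T k)) ^+ 2 + (b T + d (T k)) ^+ 2) =
  mean (fun T => a T ^+ 2 + b T ^+ 2) + avg (fun x => c x ^+ 2 + d x ^+ 2).
Proof.
set P := fun T => a T ^+ 2 + b T ^+ 2; set q := fun x => c x ^+ 2 + d x ^+ 2.
rewrite (eq_mean (fun T => P T + (2 * (a T * c (T k))
    + (2 * (b T * d (T k)) + q (T k))))) => [|T]; last by rewrite /P /q; ring.
clearbody P q; rewrite !meanD !meanZ (mean_mul_coord r_gt0 c a_k) (mean_mul_coord r_gt0 d b_k).
by rewrite (mean_coord r_gt0) avg_c avg_d !mulr0 !add0r.
Qed.

Lemma mean_quartic_add_coord_le : mean a = 0 -> mean b = 0 ->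
  mean (fun T => ((a T + c (T k)) ^+ 2 + (b T + d (T k)) ^+ 2) ^+ 2) <=
  mean (fun T => (a T ^+ 2 + b T ^+ 2) ^+ 2)
  + 6 * (mean (fun T => a T ^+ 2 + b T ^+ 2) * avg (fun x => c x ^+ 2 + d x ^+ 2))
  + avg (fun x => (c x ^+ 2 + d x ^+ 2) ^+ 2).
Proof.
move=> mean_a mean_b.
set P := fun T => a T ^+ 2 + b T ^+ 2; set q := fun x => c x ^+ 2 + d x ^+ 2.
have P_k : indep_of_coord k P := indep_of_coord_map2 (fun x y => x ^+ 2 + y ^+ 2) a_k b_k.
have Pa_k : indep_of_coord k (fun T => P T * a T) := indep_of_coord_map2 _ P_k a_k.
have Pb_k : indep_of_coord k (fun T => P T * b T) := indep_of_coord_map2 _ P_k b_k.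
(* After averaging, the terms of odd degree in (a, b) or in (c, d) vanish. *)
apply: (@le_trans _ _ (mean (fun T => P T ^+ 2 + (6 * (P T * q (T k))
    + (q (T k) ^+ 2 + (4 * ((P T * a T) * c (T k)) + (4 * ((P T * b T) * d (T k))
    + (4 * (a T * (c (T k) * q (T k)))
    + 4 * (b T * (d (T k) * q (T k))))))))))).
  by apply: ler_mean => T; apply: sqr_norm2D_expand_le.
rewrite -[mean (fun T => (a T ^+ 2 + b T ^+ 2) ^+ 2)]/(mean (fun T => P T ^+ 2)).
rewrite -[avg (fun x => (c x ^+ 2 + d x ^+ 2) ^+ 2)]/(avg (fun x => q x ^+ 2)).
clearbody P q; rewrite !meanD !meanZ (mean_mul_coord r_gt0 q P_k).
rewrite (mean_coord r_gt0 k (fun x => q x ^+ 2)).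
rewrite (mean_mul_coord r_gt0 c Pa_k) (mean_mul_coord r_gt0 d Pb_k).
rewrite (mean_mul_coord r_gt0 (fun x => c x * q x) a_k).
rewrite (mean_mul_coord r_gt0 (fun x => d x * q x) b_k).
by rewrite avg_c avg_d mean_a mean_b !mulr0 !mul0r !mulr0 !addr0 !addrA.
Qed.

End IndependentIncrement.

Lemma sum_ord_ltS (V : nmodType) (n m : nat) (mn : (m < n)%N) (X : 'I_n -> V) :
  \sum_(k < n | (k < m.+1)%N) X k = \sum_(k < n | (k < m)%N) X k + X (Ordinal mn).
Proof.
rewrite (bigD1 (Ordinal mn)) //= addrC; congr (_ + _); apply: eq_bigl => k.
by rewrite -val_eqE /= ltnS ltn_neqAle andbC.
Qed.

Definition psum {V : nmodType} {r n : nat} (g : 'I_n -> 'I_r -> V) (m : nat)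
  (T : cube r n) : V := \sum_(k < n | (k < m)%N) g k (T k).

Section PartialSum.
Context {V : nmodType} {r n : nat} (g : 'I_n -> 'I_r -> V).

Lemma psum0 (T : cube r n) : psum g 0 T = 0.
Proof. by rewrite /psum big_pred0. Qed.

Lemma psumS m (mn : (m < n)%N) (T : cube r n) :
  psum g m.+1 T = psum g m T + g (Ordinal mn) (T (Ordinal mn)).
Proof. exact: sum_ord_ltS. Qed.

Lemma psum_indep {m} (mn : (m < n)%N) : indep_of_coord (Ordinal mn) (psum g m).
Proof.
move=> T T' TT'; apply: eq_bigr => k km; congr (g k _); apply: TT'.
by rewrite -val_eqE /= neq_ltn km.
Qed.

Lemma psum_full (T : cube r n) : psum g n T = \sum_(k < n) g k (T k).
Proof. by apply: eq_bigl => k; rewrite ltn_ord. Qed.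

End PartialSum.

Lemma avg_ge0 (R : numFieldType) (r : nat) (G : 'I_r -> R) :
  (forall x, 0 <= G x) -> 0 <= avg G.
Proof. by move=> G0; rewrite mulr_ge0 ?invr_ge0 ?ler0n ?sumr_ge0. Qed.

Lemma sum_sqr_le (R : realFieldType) (I : finType) (P : pred I) (F : I -> R) :
  (forall i, 0 <= F i) -> \sum_(i | P i) F i ^+ 2 <= (\sum_(i | P i) F i) ^+ 2.
Proof.
move=> F0; suff [] : 0 <= \sum_(i | P i) F i /\
    \sum_(i | P i) F i ^+ 2 <= (\sum_(i | P i) F i) ^+ 2 by [].
apply: (big_rec2 (fun x y => 0 <= y /\ x <= y ^+ 2)); first by rewrite expr0n.
by move=> i x y _ [y0 xy]; split; [rewrite addr_ge0 | have := F0 i; nra].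
Qed.

Lemma avg_sqr_le (R : realFieldType) (r : nat) (G : 'I_r -> R) : (0 < r)%N ->
  (forall x, 0 <= G x) -> avg (fun x => G x ^+ 2) <= r%:R * avg G ^+ 2.
Proof.
move=> r_gt0 G0; rewrite /avg.
have -> : r%:R * (r%:R^-1 * \sum_x G x) ^+ 2 = r%:R^-1 * (\sum_x G x) ^+ 2.
  by field; rewrite pnatr_eq0 -lt0n.
by rewrite ler_wpM2l ?invr_ge0 ?ler0n ?sum_sqr_le.
Qed.

Section PartialSumMoments.
Context {R : realFieldType} {r n : nat}.
Hypothesis r_gt0 : (0 < r)%N.
Context {ga gb : 'I_n -> 'I_r -> R}.
Hypotheses (avg_ga : forall k, avg (ga k) = 0) (avg_gb : forall k, avg (gb k) = 0).

Lemma mean_psum {g : 'I_n -> 'I_r -> R} m :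
  (forall k, avg (g k) = 0) -> mean (psum g m) = 0.
Proof. by move=> g0; rewrite /psum mean_sum_coord // big1. Qed.

Lemma mean_psum_sqr m : (m <= n)%N ->
  mean (fun T => psum ga m T ^+ 2 + psum gb m T ^+ 2) =
  \sum_(k < n | (k < m)%N) avg (fun x => ga k x ^+ 2 + gb k x ^+ 2).
Proof.
elim: m => [_|m IHm mn].
  by rewrite big_pred0 // (eq_mean (fun=> 0)) ?mean_cst // => T; rewrite !psum0 expr0n addr0.
rewrite sum_ord_ltS -IHm ?(ltnW mn) // -(mean_sqr_add_coord r_gt0 (psum_indep ga mn)
  (psum_indep gb mn) (avg_ga _) (avg_gb _)).
by apply: eq_mean => T; rewrite !psumS.
Qed.

Lemma mean_psum_quartic_le m : (m <= n)%N ->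
  mean (fun T => (psum ga m T ^+ 2 + psum gb m T ^+ 2) ^+ 2) <=
  6 * (\sum_(k < n | (k < m)%N) avg (fun x => ga k x ^+ 2 + gb k x ^+ 2)) ^+ 2
  + \sum_(k < n | (k < m)%N) avg (fun x => (ga k x ^+ 2 + gb k x ^+ 2) ^+ 2).
Proof.
elim: m => [_|m IHm mn].
  rewrite !big_pred0 // (eq_mean (fun=> 0)) => [|T]; last first.
    by rewrite !psum0 expr0n addr0 expr0n.
  by rewrite mean_cst // expr0n mulr0 addr0.
have mn' := ltnW mn; rewrite !sum_ord_ltS.
rewrite (eq_mean (fun T => ((psum ga m T + ga (Ordinal mn) (T (Ordinal mn))) ^+ 2
  + (psum gb m T + gb (Ordinal mn) (T (Ordinal mn))) ^+ 2) ^+ 2)) => [|T]; last first.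
  by rewrite !psumS.
apply: le_trans (mean_quartic_add_coord_le r_gt0 (psum_indep ga mn) (psum_indep gb mn)
  (avg_ga _) (avg_gb _) (mean_psum m avg_ga) (mean_psum m avg_gb)) _.
rewrite mean_psum_sqr //; have := IHm mn'.
set s := \sum_(k < n | _) _; set e := avg _; set t := \sum_(k < n | _) _.
have s0 : 0 <= s by apply: sumr_ge0 => k _; apply: avg_ge0 => x; rewrite addr_ge0 ?sqr_ge0.
have e0 : 0 <= e by apply: avg_ge0 => x; rewrite addr_ge0 ?sqr_ge0.
have := mulr_ge0 s0 e0; have := sqr_ge0 e; rewrite !expr2; lra.
Qed.

End PartialSumMoments.

(** * Distance to {0, 1} *)

Lemma sqr_norm2D_le {R : realFieldType} (x y u v : R) :
  ((x + u) ^+ 2 + (y + v) ^+ 2) ^+ 2 <= 8 * (x ^+ 2 + y ^+ 2) ^+ 2 + 8 * (u ^+ 2 + v ^+ 2) ^+ 2.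
Proof.
have h : (x + u) ^+ 2 + (y + v) ^+ 2 <= 2 * (x ^+ 2 + y ^+ 2) + 2 * (u ^+ 2 + v ^+ 2).
  by have := sqr_ge0 (x - u); have := sqr_ge0 (y - v); lra.
have := sqr_ge0 (x ^+ 2 + y ^+ 2 - (u ^+ 2 + v ^+ 2)).
have : 0 <= (x + u) ^+ 2 + (y + v) ^+ 2 by rewrite addr_ge0 ?sqr_ge0.
by nra.
Qed.

Lemma sqr_norm2_shift_ge {R : realFieldType} (x y s : R) : s ^+ 2 = 1 ->
  (x ^+ 2 + y ^+ 2) - 4 * (x ^+ 2 + y ^+ 2) ^+ 2 <= (x + s) ^+ 2 + y ^+ 2.
Proof.
move=> s2; have h2 : (x ^+ 2) ^+ 2 <= (x ^+ 2 + y ^+ 2) ^+ 2.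
  by rewrite ler_sqr ?lerDl ?nnegrE ?addr_ge0 ?sqr_ge0.
have := sqr_ge0 (2 * x ^+ 2 - 1 / 2); have := sqr_ge0 (x + s / 2).
by nra.
Qed.

Section DistanceToZeroOne.
Context {R : realType}.
Implicit Types z w b : R[i].

Lemma normc_sqrE z : Normc.normc z ^+ 2 = Re z ^+ 2 + Im z ^+ 2.
Proof. by case: z => a b /=; rewrite sqr_sqrtr // addr_ge0 ?sqr_ge0. Qed.

Lemma d01_sqr_le z {b} : b = 0 \/ b = 1 -> d01 z ^+ 2 <= Normc.normc (z - b) ^+ 2.
Proof.
have normc_ge0 w : 0 <= Normc.normc w by case: w => ? ? /=; rewrite sqrtr_ge0.
rewrite ler_sqr ?nnegrE ?normc_ge0 //; last by rewrite /d01 le_min !normc_ge0.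
by case=> ->; rewrite ?subr0 ge_min lexx ?orbT.
Qed.

Lemma d01_sqr_attained z :
  exists2 b, b = 0 \/ b = 1 & d01 z ^+ 2 = Normc.normc (z - b) ^+ 2.
Proof.
rewrite /d01; have [_|_] := leP (Normc.normc z) (Normc.normc (z - 1)).
  by exists 0; [left | rewrite subr0].
by exists 1; [right |].
Qed.

Lemma d01_sqr_le_add z w : d01 z ^+ 2 <= 2 * d01 (z + w) ^+ 2 + 2 * Normc.normc w ^+ 2.
Proof.
have [b b01 ->] := d01_sqr_attained (z + w).
apply: le_trans (d01_sqr_le z b01) _; rewrite !normc_sqrE !raddfB !raddfD /=.
by have := sqr_ge0 (Re z - Re b + 2 * Re w); have := sqr_ge0 (Im z - Im b + 2 * Im w); nra.
Qed.

Lemma d01_sqr_ge z {b} : b = 0 \/ b = 1 ->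
  Normc.normc (z - b) ^+ 2 - 4 * (Normc.normc (z - b) ^+ 2) ^+ 2 <= d01 z ^+ 2.
Proof.
have [b' b'01 ->] := d01_sqr_attained z; rewrite !normc_sqrE !raddfB /=.
set x := Re z; set y := Im z.
case=> ->; case: b'01 => -> /=; rewrite ?subr0.
- by rewrite lerBlDr lerDl mulr_ge0 // sqr_ge0.
- by apply: sqr_norm2_shift_ge; rewrite sqrrN expr1n.
- by have := @sqr_norm2_shift_ge _ (x - 1) y 1 (expr1n _ _); rewrite subrK.
- by rewrite lerBlDr lerDl mulr_ge0 // sqr_ge0.
Qed.

End DistanceToZeroOne.

Section CubeMeans.
Context {R : realType} {r n : nat}.
Hypothesis r_gt0 : (0 < r)%N.

Lemma d01_const_sqr_le (c : R[i]) (Y : cube r n -> R[i]) :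
  d01 c ^+ 2 <= 2 * norm2sqR (fun T => d01 (c + Y T)) + 2 * norm2sq Y.
Proof.
rewrite /norm2sqR /norm2sq -!meanZ -meanD -{1}(mean_cst (n := n) r_gt0 (d01 c ^+ 2)).
by apply: ler_mean => T; apply: d01_sqr_le_add.
Qed.

Lemma d01_const_sqr_ge (c : R[i]) (Y : cube r n -> R[i]) :
  mean (fun T => Re (Y T)) = 0 -> mean (fun T => Im (Y T)) = 0 ->
  d01 c ^+ 2 + norm2sq Y - 32 * (d01 c ^+ 2) ^+ 2
    - 32 * mean (fun T => (Normc.normc (Y T) ^+ 2) ^+ 2)
  <= norm2sqR (fun T => d01 (c + Y T)).
Proof.
move=> mean_Re mean_Im; have [b b01 Ab] := d01_sqr_attained c.
set A := d01 c ^+ 2 in Ab *; set x := Re (c - b); set y := Im (c - b).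
have AE : A = x ^+ 2 + y ^+ 2 by rewrite Ab normc_sqrE.
have lower T : (A - 32 * A ^+ 2) + (2 * x * Re (Y T) + (2 * y * Im (Y T)
    + (Normc.normc (Y T) ^+ 2 + (-32) * (Normc.normc (Y T) ^+ 2) ^+ 2)))
    <= d01 (c + Y T) ^+ 2.
  apply: le_trans (d01_sqr_ge (c + Y T) b01).
  have ReE : Re (c - b + Y T) = x + Re (Y T) by rewrite raddfD.
  have ImE : Im (c - b + Y T) = y + Im (Y T) by rewrite raddfD.
  rewrite [c + Y T - b]addrAC !normc_sqrE ReE ImE AE.
  by have := sqr_norm2D_le x y (Re (Y T)) (Im (Y T)); lra.
apply: le_trans (ler_mean lower); rewrite /norm2sq !meanD !(mean_cst r_gt0) !meanZ.
by rewrite mean_Re mean_Im !mulr0 !add0r; lra.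
Qed.

End CubeMeans.

Section LevelOneMoments.
Context {R : realType} {r n : nat}.
Hypothesis r_gt0 : (0 < r)%N.
Variable f : cube r n -> R[i].

Lemma avg_Re_deg1_coord k : avg (fun x => Re (deg1_coord f k x)) = 0.
Proof. by rewrite /avg -raddf_sum sum_deg1_coord // mulr0. Qed.

Lemma avg_Im_deg1_coord k : avg (fun x => Im (deg1_coord f k x)) = 0.
Proof. by rewrite /avg -raddf_sum sum_deg1_coord // mulr0. Qed.

Lemma mean_Re_feq1 : mean (fun T => Re (feq f 1 T)) = 0.
Proof.
under eq_mean do rewrite feq1E raddf_sum.
rewrite (mean_sum_coord r_gt0 _ (fun k x => Re (deg1_coord f k x))).
by apply: big1 => k _; apply: avg_Re_deg1_coord.
Qed.

Lemma mean_Im_feq1 : mean (fun T => Im (feq f 1 T)) = 0.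
Proof.
under eq_mean do rewrite feq1E raddf_sum.
rewrite (mean_sum_coord r_gt0 _ (fun k x => Im (deg1_coord f k x))).
by apply: big1 => k _; apply: avg_Im_deg1_coord.
Qed.

Lemma feq1_quartic_le :
  mean (fun T => (Normc.normc (feq f 1 T) ^+ 2) ^+ 2) <=
  (6 + r%:R) * norm2sq (feq f 1) ^+ 2.
Proof.
pose ga k x := Re (deg1_coord f k x); pose gb k x := Im (deg1_coord f k x).
have feqE T : Normc.normc (feq f 1 T) ^+ 2 = psum ga n T ^+ 2 + psum gb n T ^+ 2.
  by rewrite normc_sqrE !psum_full feq1E !raddf_sum.
have -> : norm2sq (feq f 1) =
    \sum_(k < n | (k < n)%N) avg (fun x => ga k x ^+ 2 + gb k x ^+ 2).
  rewrite -(mean_psum_sqr r_gt0 avg_Re_deg1_coord avg_Im_deg1_coord _ (leqnn n)).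
  by apply: eq_mean => T; rewrite feqE.
under eq_mean do rewrite feqE.
apply: le_trans (mean_psum_quartic_le r_gt0 avg_Re_deg1_coord avg_Im_deg1_coord _ (leqnn n)) _.
rewrite [(6 + _) * _]mulrDl lerD2l.
have q_ge0 k x : 0 <= ga k x ^+ 2 + gb k x ^+ 2 by rewrite addr_ge0 ?sqr_ge0.
apply: (@le_trans _ _
    (\sum_(k < n | (k < n)%N) r%:R * avg (fun x => ga k x ^+ 2 + gb k x ^+ 2) ^+ 2)).
  by apply: ler_sum => k _; apply: avg_sqr_le => // x; apply: q_ge0.
rewrite -big_distrr /= ler_wpM2l ?ler0n //.
by apply: sum_sqr_le => k; apply: avg_ge0.
Qed.

End LevelOneMoments.

(* If 2 e <= s, then A <= 3 s and rho s <= 1/500, so 32 A^2 + 32 M <= 192 rho s^2 < s / 2,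
   contradicting s - e >= s / 2. *)
Lemma weight_lt_twice_eps {R : realFieldType} {rho e s A M : R} :
  3 <= rho -> 0 <= s -> 0 <= A -> s < 10 ^+ 4 * e -> e < 2 / (10 ^+ 8 * rho) ->
  A <= 2 * e + 2 * s -> M <= (6 + rho) * s ^+ 2 ->
  A + s - 32 * A ^+ 2 - 32 * M <= e -> s < 2 * e.
Proof.
move=> rho3 s0 A0 s_lt e_lt A_le M_le main; rewrite ltNge; apply/negP => e_le.
set K : R := 10 ^+ 4 in s_lt.
have K1000 : 1000 <= K by rewrite /K -natrX ler_nat.
have K_gt0 : 0 < K by apply: lt_le_trans K1000; rewrite ltr0n.
have e_gt0 : 0 < e by rewrite -(pmulr_rgt0 _ K_gt0); lra.
have eK : e * (K * K * rho) < 2.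
  by rewrite -ltr_pdivlMr ?mulr_gt0 -?exprD //; lra.
have rho_s : rho * s * 1000 < 2.
  have : rho * s * K <= rho * (K * e) * K.
    by rewrite ler_wpM2r ?ler_wpM2l ?ltW //; lra.
  have : rho * s * 1000 <= rho * s * K by rewrite ler_wpM2l ?mulr_ge0 //; lra.
  nra.
have A_le3s : A <= 3 * s by lra.
have A2 : A ^+ 2 <= 9 * s ^+ 2.
  by rewrite (_ : 9 * s ^+ 2 = (3 * s) ^+ 2) ?ler_sqr ?nnegrE //; [lra | ring].
have : rho * s * s <= 1 / 500 * s by rewrite ler_wpM2r //; lra.
have := sqr_ge0 s; rewrite !expr2 in A2 M_le *; nra.
Qed.

Theorem lemma3p2 (R : realType) (r n : nat) (f : cube r n -> R[i]) (eps' : R) :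
  (3 <= r)%N -> (1 <= n)%N ->
  (forall T, fgt f 1 T = 0) ->
  norm2sqR (fun T => d01 (f T)) <= eps' ->
  norm2sq (feq f 1) < 10 ^+ 4 * eps' ->
  eps' < 2 / (10 ^+ 8 * r%:R) ->
  norm2sq (feq f 1) < 2 * eps'.
Proof.
move=> r3 _ f_gt1 d_le s_lt e_lt; have r_gt0 : (0 < r)%N by apply: leq_trans r3.
have [c fE] := deg1_decomposition r_gt0 f f_gt1.
have dE : norm2sqR (fun T => d01 (f T)) = norm2sqR (fun T => d01 (c + feq f 1 T)).
  by apply: eq_mean => T; rewrite fE.
rewrite dE in d_le.
have upper := d01_const_sqr_le r_gt0 c (feq f 1).
have lower := d01_const_sqr_ge r_gt0 c (feq f 1) (mean_Re_feq1 r_gt0 f)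
  (mean_Im_feq1 r_gt0 f).
apply: (weight_lt_twice_eps _ _ (sqr_ge0 _) s_lt e_lt _ (feq1_quartic_le r_gt0 f)
  (le_trans lower d_le)).
- by rewrite ler_nat.
- by apply: mean_ge0 => T; apply: sqr_ge0.
- lra.
Qed.
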